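(* Let $q>9$ be an odd prime power which is a square, and let $a,b,c,d\in\mathbb{F}_q$ with $a\neq 0$. Put $\ell(x)=ax^{\sqrt{q}+1}+dx^{\sqrt{q}}+bx+c$. If there is a subset $D\subseteq\mathbb{F}_q$ with $|D|>q-\sqrt{q}/2+1/2$ such that $\ell(x)$ is a square in $\mathbb{F}_q$ (i.e. $\ell(x)=y^2$ for some $y\in\mathbb{F}_q$) for every $x\in D$, then $a^{\sqrt{q}}b=d^{\sqrt{q}}a$. *)

From mathcomp Require Import all_boot all_order all_algebra all_field.
Set Implicit Arguments. Unset Strict Implicit. Unset Printing Implicit Defensive.

(* Write r = sqrt q.  Substituting x = u - d/a turns l into
   L(u) = a u^(r+1) + e u + f, where e = 0 exactly when a^r b = d^r a, so assume
   e <> 0; it suffices to exhibit r - 2 values of u at which L(u) is a nonsquare,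
   since then |D| <= q - r + 2.  Every element of the subfield F_r = {t | t^r = t}
   is a norm u^(r+1), hence a square; so if k L(u)^r = k^r L(u) for a nonsquare k,
   then L(u) is zero or a nonsquare.  L has at most two zeros: a zero is determined
   by its norm, and that norm is a root of a nonzero quadratic.  If a is a
   nonsquare, the r points with e u = a t - f, t in F_r, satisfy the relation with
   k = a.  If a is a square, a well-chosen nonsquare k makes it hold on a whole
   "circle" (u + c)^(r+1) = rho, which has r + 1 points. *)

From mathcomp Require Import all_boot all_order all_algebra all_field all_solvable.
From mathcomp Require Import ring zify lra.
Import GRing.Theory Num.Theory.
Local Open Scope ring_scope.
Set Implicit Arguments. Unset Strict Implicit. Unset Printing Implicit Defensive.

Lemma card_roots_lt (R : finIdomainType) (p : {poly R}) :
  p != 0 -> (#|[set x | root p x]| < size p)%N.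
Proof.
move=> p_neq0; rewrite cardE; apply: max_poly_roots p_neq0 _ (enum_uniq _).
by apply/allP => x; rewrite mem_enum inE.
Qed.

Lemma card_expr_eq_le (R : finIdomainType) n (c : R) :
  (0 < n)%N -> (#|[set x | x ^+ n == c]| <= n)%N.
Proof.
move=> n_gt0; have pX_neq0 : 'X^n - c%:P != 0 by rewrite -size_poly_eq0 size_XnsubC.
have := card_roots_lt pX_neq0; rewrite size_XnsubC // ltnS; apply: leq_trans.
by apply: subset_leq_card; apply/subsetP => x; rewrite !inE rootE !hornerE subr_eq0.
Qed.

Lemma card_quadratic_roots_le (R : finIdomainType) (A B C : R) :
  ~~ [&& A == 0, B == 0 & C == 0] ->
  (#|[set x | (A * x ^+ 2 + B * x + C == 0)%R]| <= 2)%N.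
Proof.
move=> ABC_neq0; pose p := Poly [:: C; B; A].
have p_neq0 : p != 0.
  apply: contra ABC_neq0 => /eqP p0.
  have coef_eq0 i : [:: C; B; A]`_i = 0 by rewrite -coef_Poly -/p p0 coef0.
  by move: (coef_eq0 0%N) (coef_eq0 1%N) (coef_eq0 2%N) => /= -> -> ->; rewrite eqxx.
have := card_roots_lt p_neq0; move/leq_trans/(_ (size_Poly _)); rewrite ltnS.
apply: leq_trans; apply: subset_leq_card; apply/subsetP => x.
by rewrite !inE rootE horner_Poly /= mul0r add0r expr2 mulrA -mulrDl.
Qed.

Lemma card_le_imset_fibers (T T' : finType) (f : T -> T') (A : {set T}) m :
  (forall y, #|[set x in A | f x == y]| <= m)%N -> (#|A| <= #|f @: A| * m)%N.
Proof.
move=> fiber_le; rewrite -sum1_card (partition_big_imset f) /= -sum_nat_const.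
apply: leq_sum => y _; apply: leq_trans (fiber_le y).
by rewrite -sum1_card; apply/eq_leq/eq_bigl => x; rewrite inE.
Qed.

Lemma card_subset_setC_imset (T : finType) (f : T -> T) (A B : {set T}) :
  injective f -> B \subset ~: (f @: A) -> (#|B| + #|A| <= #|T|)%N.
Proof.
move=> f_inj B_sub; rewrite -(card_imset A f_inj) -(cardsC (f @: A)) addnC leq_add2l.
exact: subset_leq_card.
Qed.

Section PowerMaps.

Variable F : finFieldType.

Let card_pred_gt0 : (0 < #|F|.-1)%N.
Proof. by rewrite ltn_predRL finNzRing_gt1. Qed.

Lemma expf_card_pred (x : F) : x != 0 -> x ^+ #|F|.-1 = 1.
Proof.
move=> x_neq0; apply: (mulIf x_neq0).
by rewrite mul1r -exprSr prednK ?expf_card // ltnW // -ltn_predRL.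
Qed.

Lemma card_expr_image_ge n m : (n * m)%N = #|F|.-1 ->
  (m <= #|[set x ^+ n | x in [set~ 0%R : F]]|)%N.
Proof.
move=> nm; have /andP[n_gt0 _] : (0 < n)%N && (0 < m)%N by rewrite -muln_gt0 nm.
have := @card_le_imset_fibers _ _ (fun x : F => x ^+ n) [set~ 0] n.
rewrite cardsC1 -nm mulnC leq_pmul2r //; apply => y.
apply: leq_trans (card_expr_eq_le y n_gt0).
by apply/subset_leq_card/subsetP => x; rewrite !inE => /andP[].
Qed.

Lemma unity_rootsE n m : (n * m)%N = #|F|.-1 ->
  [set x ^+ n | x in [set~ 0%R : F]] = [set y | y ^+ m == 1].
Proof.
move=> nm; have /andP[_ m_gt0] : (0 < n)%N && (0 < m)%N by rewrite -muln_gt0 nm.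
apply/eqP; rewrite eqEcard (leq_trans (card_expr_eq_le 1 m_gt0) (card_expr_image_ge nm)).
rewrite andbT; apply/subsetP => y /imsetP[x]; rewrite !inE => x_neq0 ->.
by rewrite -exprM nm expf_card_pred.
Qed.

Lemma card_unity_roots n m : (n * m)%N = #|F|.-1 -> #|[set y : F | y ^+ m == 1]| = m.
Proof.
move=> nm; have /andP[_ m_gt0] : (0 < n)%N && (0 < m)%N by rewrite -muln_gt0 nm.
apply/eqP; rewrite eqn_leq card_expr_eq_le //.
by rewrite -(unity_rootsE nm) card_expr_image_ge.
Qed.

End PowerMaps.

Section Squares.

Variable F : finFieldType.

Definition is_square (x : F) := [exists y, y ^+ 2 == x].

Lemma is_squareP (x : F) : reflect (exists y, y ^+ 2 = x) (is_square x).
Proof. by apply: (iffP existsP) => -[y /eqP]; exists y. Qed.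

Lemma is_square0 : is_square 0.
Proof. by apply/is_squareP; exists 0; rewrite expr0n. Qed.

Lemma is_squareM (x y : F) : is_square x -> is_square y -> is_square (x * y).
Proof.
by move=> /is_squareP[u <-] /is_squareP[v <-]; apply/is_squareP; exists (u * v); rewrite exprMn.
Qed.

Lemma is_squareV (x : F) : is_square x -> is_square x^-1.
Proof. by move=> /is_squareP[u <-]; apply/is_squareP; exists u^-1; rewrite exprVn. Qed.

Lemma exists_nonsquare : odd #|F| -> exists k : F, ~~ is_square k.
Proof.
move=> odd_F; set m := #|F|./2; set S := 0 |: [set y : F | y ^+ m == 1].
have m2 : (2 * m)%N = #|F|.-1 by rewrite mul2n odd_halfK.
have m_gt0 : (0 < m)%N by have := finNzRing_gt1 F; rewrite -ltn_predRL -m2 muln_gt0.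
have /set0Pn[k] : ~: S != set0.
  rewrite -card_gt0 -(ltn_add2l #|S|) cardsC addn0 cardsU1.
  apply: leq_ltn_trans (leq_add (leq_b1 _) (card_expr_eq_le 1 m_gt0)) _.
  by rewrite add1n -ltn_predRL -m2 ltn_Pmull.
rewrite !inE negb_or => /andP[k_neq0 km_neq1]; exists k.
apply: contra km_neq1 => /is_squareP[y y2k].
have y_neq0 : y != 0 by apply: contraNneq k_neq0 => y0; rewrite -y2k y0 expr0n.
by rewrite -y2k -exprM m2 expf_card_pred.
Qed.

End Squares.

Section SqrtSubfield.

Variables (F : finFieldType) (r : nat).
Hypotheses (card_F : #|F| = (r * r)%N) (odd_F : odd #|F|).

Lemma sqrt_card_gt1 : (1 < r)%N.
Proof. by have := finNzRing_gt1 F; rewrite card_F; case: (r) => [|[|]]. Qed.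

Let r_gt0 : (0 < r)%N := ltnW sqrt_card_gt1.

Lemma odd_sqrt_card : odd r.
Proof. by move: odd_F; rewrite card_F oddM andbb. Qed.

Lemma pchar_nat_sqrt_card : [pchar F].-nat r.
Proof.
have [p _ pF] := finPcharP F.
have := abelem_pgroup (fin_ring_pchar_abelem pF); rewrite /pgroup cardsT card_F.
by move/(pnat_dvd (dvdn_mulr r (dvdnn r))); rewrite (eq_pnat _ (pcharf_eq pF)).
Qed.

Lemma frobD (x y : F) : (x + y) ^+ r = x ^+ r + y ^+ r.
Proof. exact: exprDn_pchar pchar_nat_sqrt_card. Qed.

Lemma frobN (x : F) : (- x) ^+ r = - x ^+ r.
Proof. exact: exprNn_pchar pchar_nat_sqrt_card. Qed.

Lemma frobB (x y : F) : (x - y) ^+ r = x ^+ r - y ^+ r.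
Proof. by rewrite frobD frobN. Qed.

Lemma frobK (x : F) : (x ^+ r) ^+ r = x.
Proof. by rewrite -exprM -card_F expf_card. Qed.

Lemma normK (u : F) : (u ^+ r.+1) ^+ r = u ^+ r.+1.
Proof. by rewrite exprS exprMn frobK mulrC. Qed.

Let card_F_pred : (r.+1 * r.-1)%N = #|F|.-1.
Proof. by rewrite card_F; case: (r) r_gt0 => // n _; rewrite mulSn mulnS /=; lia. Qed.

Lemma norm_onto_fixed (t : F) : t != 0 -> t ^+ r = t -> exists u, u ^+ r.+1 = t.
Proof.
move=> t_neq0 t_fixed; have : t \in [set y | y ^+ r.-1 == 1].
  by rewrite inE; apply/eqP/(mulIf t_neq0); rewrite mul1r -exprSr prednK.
by rewrite -(unity_rootsE card_F_pred) => /imsetP[u _ ->]; exists u.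
Qed.

Lemma fixed_is_square (t : F) : t ^+ r = t -> is_square t.
Proof.
have [-> _|t_neq0 /(norm_onto_fixed t_neq0)[u <-]] := eqVneq t 0; first exact: is_square0.
by apply/is_squareP; exists (u ^+ r.+1./2); rewrite -exprM muln2 even_halfK //= odd_sqrt_card.
Qed.

Lemma card_fixed_ge : (r <= #|[set t : F | t ^+ r == t]|)%N.
Proof.
have r1_gt0 : (0 < r.-1)%N by rewrite ltn_predRL sqrt_card_gt1.
have fixed_sub : 0 |: [set y : F | y ^+ r.-1 == 1] \subset [set t | t ^+ r == t].
  apply/subsetP => y; rewrite !inE => /orP[/eqP -> | /eqP y1]; first by rewrite expr0n gtn_eqF.
  by rewrite -(prednK r_gt0) exprS y1 mulr1.
apply: leq_trans (subset_leq_card fixed_sub).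
rewrite cardsU1 (card_unity_roots card_F_pred) inE expr0n gtn_eqF //= eq_sym oner_eq0.
by rewrite add1n prednK.
Qed.

Lemma card_circle_ge (c rho : F) : rho != 0 -> rho ^+ r = rho ->
  (r.+1 <= #|[set u | (u + c) ^+ r.+1 == rho]|)%N.
Proof.
move=> rho_neq0 rho_fixed; have [u0 u0_norm] := norm_onto_fixed rho_neq0 rho_fixed.
have u0_neq0 : u0 != 0 by apply: contraNneq rho_neq0 => u00; rewrite -u0_norm u00 expr0n.
have shift_inj : injective (fun z => u0 * z - c) by move=> z1 z2 /addIr /(mulfI u0_neq0).
have card_F_pred' : (r.-1 * r.+1)%N = #|F|.-1 by rewrite mulnC.
rewrite -{1}(card_unity_roots card_F_pred') -(card_imset _ shift_inj).
apply/subset_leq_card/subsetP => u /imsetP[z]; rewrite !inE => /eqP z1 ->.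
by rewrite subrK exprMn u0_norm z1 mulr1.
Qed.

Lemma twisted_fixed_nonsquare (k x : F) : ~~ is_square k ->
  k * x ^+ r = k ^+ r * x -> (x == 0) || ~~ is_square x.
Proof.
move=> k_nsq twisted; have [//|x_neq0 /=] := eqVneq x 0.
have k_neq0 : k != 0 by apply: contraNneq k_nsq => ->; exact: is_square0.
have ratio_fixed : (x / k) ^+ r = x / k.
  apply/eqP; rewrite exprMn exprVn eqr_div ?expf_neq0 //.
  by rewrite mulrC twisted mulrC.
apply: contra k_nsq => x_sq.
have := is_squareM x_sq (is_squareV (fixed_is_square ratio_fixed)).
by rewrite invf_div mulrC divfK.
Qed.

Section NormQuadratic.

Variables (a e f : F).
Hypotheses (a_neq0 : a != 0) (e_neq0 : e != 0).

Let L u := a * u ^+ r.+1 + e * u + f.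

Lemma zero_norm_quadratic u : L u = 0 ->
  (a * a ^+ r) * (u ^+ r.+1) ^+ 2 + (a * f ^+ r + a ^+ r * f - e * e ^+ r) * u ^+ r.+1
    + f * f ^+ r = 0.
Proof.
move=> Lu0; have n_split : u ^+ r.+1 = u * u ^+ r by rewrite exprS.
have eu : e * u = - (a * u ^+ r.+1 + f) by rewrite -[e * u]subr0 -Lu0 /L; ring.
have eu_conj : e ^+ r * u ^+ r = - (a ^+ r * u ^+ r.+1 + f ^+ r).
  by rewrite -exprMn eu frobN frobD exprMn normK.
transitivity ((e * u) * (e ^+ r * u ^+ r) - e * e ^+ r * (u * u ^+ r)); last by ring.
by rewrite eu eu_conj -n_split; ring.
Qed.

Lemma card_zeros_le2 : (#|[set u | (L u == 0)%R]| <= 2)%N.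
Proof.
have norm_inj : {in [set u | (L u == 0)%R] &, injective (fun u => u ^+ r.+1)}.
  move=> u v; rewrite !inE => /eqP Lu0 /eqP Lv0 norm_uv.
  have : L u - L v = e * (u - v) by rewrite /L norm_uv; ring.
  by rewrite Lu0 Lv0 subrr => /esym/eqP; rewrite mulf_eq0 (negbTE e_neq0) subr_eq0 => /eqP.
rewrite -(card_in_imset norm_inj); apply: leq_trans (card_quadratic_roots_le _).
  apply/subset_leq_card/subsetP => n /imsetP[u]; rewrite inE => /eqP Lu0 ->.
  by rewrite inE; apply/eqP/zero_norm_quadratic.
by rewrite mulf_eq0 expf_eq0 (negbTE a_neq0) andbF.
Qed.

Lemma card_nonsquare_ge_of_twisted (S : {set F}) k : ~~ is_square k ->
  {in S, forall u, k * L u ^+ r = k ^+ r * L u} ->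
  (#|S| - 2 <= #|[set u | ~~ is_square (L u)]|)%N.
Proof.
move=> k_nsq twisted.
have S_sub : S \subset [set u | ~~ is_square (L u)] :|: [set u | (L u == 0)%R].
  by apply/subsetP => u uS; rewrite !inE orbC (twisted_fixed_nonsquare k_nsq (twisted u uS)).
have := leq_trans (subset_leq_card S_sub) (leq_card_setU _ _).1.
by have := card_zeros_le2; lia.
Qed.

Lemma card_nonsquare_values_nonsquare_lead : ~~ is_square a ->
  (r - 2 <= #|[set u | ~~ is_square (L u)]|)%N.
Proof.
move=> a_nsq; pose phi t := (a * t - f) / e.
have phi_inj : injective phi.
  by move=> t1 t2 /(mulIf (invr_neq0 e_neq0)) /addIr /(mulfI a_neq0).
apply: leq_trans (leq_sub2r 2 card_fixed_ge) _; rewrite -(card_imset _ phi_inj).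
apply: card_nonsquare_ge_of_twisted a_nsq _ => u /imsetP[t]; rewrite inE => /eqP t_fixed ->.
set v := phi t; set s := v ^+ r.+1 + t.
have ev : e * v = a * t - f by rewrite /v /phi mulrC divfK.
have L_v : L v = a * s by rewrite /L ev /s; ring.
have s_fixed : s ^+ r = s by rewrite frobD normK t_fixed.
by rewrite L_v exprMn s_fixed mulrCA.
Qed.

(* In [twisted_on_circle], D ^+ 2 * rho = k ^+ 2 * P (k ^+ r.-1): this keeps the
   circle from degenerating to the single point u = - c. *)
Let P n := (n * a - a ^+ r) * (f ^+ r - n * f) - e * e ^+ r * n.

Lemma exists_twisting_nonsquare : (3 < r)%N ->
  exists2 k, ~~ is_square k & P (k ^+ r.-1) != 0.
Proof.
move=> r_gt3; have [k0 k0_nsq] := exists_nonsquare odd_F.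
have k0_neq0 : k0 != 0 by apply: contraNneq k0_nsq => ->; exact: is_square0.
set m := (2 * r.-1)%N; set c := k0 ^+ r.-1.
have c_neq0 : c != 0 by rewrite expf_neq0.
have m_gt0 : (0 < m)%N by rewrite muln_gt0 ltn_predRL sqrt_card_gt1.
suff [l l_neq0 Pl] : exists2 l : F, l != 0 & P (c * l ^+ m) != 0.
  have l2_neq0 : l ^+ 2 != 0 by rewrite expf_neq0.
  exists (k0 * l ^+ 2); last by rewrite exprMn -exprM.
  apply: contra k0_nsq => k0l_sq.
  have l2_sq : is_square (l ^+ 2)^-1 by apply/is_squareV/is_squareP; exists l.
  by have := is_squareM k0l_sq l2_sq; rewrite mulfK.
have [l /andP[l_neq0 Pl]|all_roots] := pickP (fun l => (l != 0) && (P (c * l ^+ m) != 0)).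
  by exists l.
pose A := - (a * f); pose B := a * f ^+ r + a ^+ r * f - e * e ^+ r.
pose C := - (a ^+ r * f ^+ r).
have card_roots : (#|[set n | (A * n ^+ 2 + B * n + C == 0)%R]| <= 2)%N.
  apply: card_quadratic_roots_le; have [f0|f_neq0] := eqVneq f 0.
    have f0r : f ^+ r = 0 by rewrite f0 expr0n gtn_eqF.
    have B_neq0 : B != 0 by rewrite /B f0r f0 !mulr0 add0r sub0r oppr_eq0 mulf_neq0 ?expf_neq0.
    by rewrite (negbTE B_neq0) andbF.
  by rewrite oppr_eq0 mulf_eq0 (negbTE a_neq0) (negbTE f_neq0).
have img_sub :
    (fun l => c * l ^+ m) @: [set~ 0] \subset [set n | (A * n ^+ 2 + B * n + C == 0)%R].
  apply/subsetP => n /imsetP[l]; rewrite !inE => l_neq0 ->.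
  have := all_roots l; rewrite l_neq0 /= => /negbFE/eqP P0.
  by apply/eqP; rewrite -[RHS]P0 /P /A /B /C; ring.
have fibers (y : F) : (#|[set l in [set~ 0%R] | (c * l ^+ m == y)%R]| <= m)%N.
  apply: leq_trans (card_expr_eq_le (y / c) m_gt0).
  apply/subset_leq_card/subsetP => l; rewrite !inE => /andP[_ /eqP <-].
  by rewrite mulrC mulKf.
have := card_le_imset_fibers fibers; rewrite cardsC1 card_F.
move/leq_trans/(_ (leq_mul (leq_trans (subset_leq_card img_sub) card_roots) (leqnn m))).
rewrite /m; nia.
Qed.

Lemma twisted_on_circle k : is_square a -> ~~ is_square k -> P (k ^+ r.-1) != 0 ->
  exists c rho, [/\ rho != 0, rho ^+ r = rho &
    forall u, (u + c) ^+ r.+1 = rho -> k * L u ^+ r = k ^+ r * L u].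
Proof.
move=> a_sq k_nsq Pk_neq0.
have k_neq0 : k != 0 by apply: contraNneq k_nsq => ->; exact: is_square0.
pose D := k ^+ r * a - k * a ^+ r.
have D_neq0 : D != 0.
  apply: contra k_nsq => D0.
  have ka_fixed : (k / a) ^+ r = k / a.
    by apply/eqP; rewrite exprMn exprVn eqr_div ?expf_neq0 // -subr_eq0.
  by have := is_squareM (fixed_is_square ka_fixed) a_sq; rewrite divfK.
have D_conj : D ^+ r = - D by rewrite frobB !exprMn !frobK opprB.
(* c and rho complete the product in
   k * L u ^+ r - k ^+ r * L u = - D * ((u + c) * (u ^+ r + g) - rho). *)
pose g := k ^+ r * e / D; pose c := - (k * e ^+ r) / D.
pose rho := (k * f ^+ r - k ^+ r * f) / D + g * c.
have g_conj : g ^+ r = c.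
  by rewrite /g /c !exprMn exprVn D_conj frobK; field; rewrite ?oppr_eq0 D_neq0.
have c_conj : c ^+ r = g.
  by rewrite /g /c !exprMn exprVn frobN exprMn D_conj frobK; field; rewrite ?oppr_eq0 D_neq0.
have rho_fixed : rho ^+ r = rho.
  rewrite /rho frobD [(g * c) ^+ r]exprMn g_conj c_conj exprMn exprVn D_conj frobB !exprMn !frobK.
  by field; rewrite ?oppr_eq0 D_neq0.
have rho_neq0 : rho != 0.
  have k_pow : k ^+ r = k ^+ r.-1 * k by rewrite -exprSr prednK.
  have rho_P : D ^+ 2 * rho = k ^+ 2 * P (k ^+ r.-1).
    by rewrite /rho /g /c /P /D k_pow; field; rewrite -k_pow.
  apply: contra Pk_neq0 => /eqP rho0; move: rho_P; rewrite rho0 mulr0 => /esym/eqP.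
  by rewrite mulf_eq0 expf_eq0 (negbTE k_neq0) andbF.
exists c, rho; split => // u on_circle.
have circle_split : (u + c) * (u ^+ r + g) = rho by rewrite -on_circle exprS frobD c_conj.
have L_conj : L u ^+ r = a ^+ r * (u * u ^+ r) + e ^+ r * u ^+ r + f ^+ r.
  by rewrite /L !frobD !exprMn normK exprS.
apply/eqP; rewrite -subr_eq0; apply/eqP.
transitivity (- D * ((u + c) * (u ^+ r + g) - rho)); last by rewrite circle_split subrr mulr0.
by rewrite L_conj /L exprS /rho /g /c /D; field; rewrite ?oppr_eq0 D_neq0.
Qed.

Lemma card_nonsquare_values_square_lead : (3 < r)%N -> is_square a ->
  (r - 2 <= #|[set u | ~~ is_square (L u)]|)%N.
Proof.
move=> r_gt3 a_sq; have [k k_nsq Pk_neq0] := exists_twisting_nonsquare r_gt3.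
have [c [rho [rho_neq0 rho_fixed twisted]]] := twisted_on_circle a_sq k_nsq Pk_neq0.
apply: leq_trans (card_nonsquare_ge_of_twisted (S := [set u | (u + c) ^+ r.+1 == rho]) k_nsq _).
  exact/leq_sub2r/(leq_trans (leqnSn r))/card_circle_ge.
by move=> u; rewrite inE => /eqP /twisted.
Qed.

Lemma card_nonsquare_values : (3 < r)%N ->
  (r - 2 <= #|[set u | ~~ is_square (L u)]|)%N.
Proof.
move=> r_gt3; have [a_sq|a_nsq] := boolP (is_square a).
  exact: card_nonsquare_values_square_lead.
exact: card_nonsquare_values_nonsquare_lead.
Qed.

End NormQuadratic.

End SqrtSubfield.

Theorem lemma2 (F : finFieldType) (r : nat)
  (hq : #|F| = (r * r)%N) (hodd : odd #|F|) (h9 : (9 < #|F|)%N)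
  (a b c d : F) (ha : a != 0) (D : {set F})
  (hD : (#|D|%:R : rat) > #|F|%:R - r%:R / 2 + 1 / 2)
  (hsq : forall x, x \in D ->
     exists y : F, a * x ^+ (r + 1) + d * x ^+ r + b * x + c = y ^+ 2) :
  a ^+ r * b = d ^+ r * a.
Proof.
have r_gt3 : (3 < r)%N by move: h9; rewrite hq; nia.
pose h := d / a; pose e := b - a * h ^+ r; pose f := c - a * h ^+ r.+1 - e * h.
apply/eqP/negPn/negP => ab_neq.
have e_neq0 : e != 0.
  apply: contra ab_neq; rewrite /e /h exprMn exprVn subr_eq0 => /eqP ->.
  by apply/eqP; field; rewrite expf_neq0.
have shift x : a * x ^+ (r + 1) + d * x ^+ r + b * x + c = a * (x + h) ^+ r.+1 + e * (x + h) + f.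
  by rewrite addn1 !exprS (frobD hq) /f /e /h exprS; field.
set NS := [set u | ~~ is_square (a * u ^+ r.+1 + e * u + f)].
have D_sub : D \subset ~: ((fun u => u - h) @: NS).
  apply/subsetP => x xD; rewrite inE; apply/imsetP => -[u]; rewrite inE => u_nsq x_eq.
  have [y y_sq] := hsq x xD; move/negP: u_nsq; apply; apply/is_squareP; exists y.
  by rewrite -y_sq shift x_eq subrK.
have card_D : (#|D| + (r - 2) <= r * r)%N.
  rewrite -hq; apply: leq_trans (card_subset_setC_imset (addIr (- h)) D_sub).
  by rewrite leq_add2l card_nonsquare_values.
have : (#|D|%:R + (r%:R - 2) <= (r * r)%:R :> rat).
  by rewrite -natrB ?(ltnW (ltnW r_gt3)) // -natrD ler_nat.
have : (4 <= r%:R :> rat) by rewrite ler_nat.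
by move: hD; rewrite hq; lra.
Qed.
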